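(* Consider $N$ agents with $$\dot x_i=\sum_{j=1}^N\alpha_{ij}(y_j-y_i),\qquad y_i=\mathrm{sat}_i(x_i),\qquad i\in\mathcal V=\{1,\dots,N\},$$ where the constant weights $\alpha_{ij}=\alpha_{ji}\ge0$ define an undirected, connected graph, and the saturation levels $s_i>0$ may be equal (homogeneous) or different (heterogeneous). Assume the initial state $x(t_0)$ is not a consensus state, i.e. not all $x_i(t_0)$ are equal. Then the agents achieve consensus if and only if $$\frac1N\Big|\sum_{i=1}^N x_i(t_0)\Big|\le\min_{i\in\mathcal V}s_i .$$
   Context: $\mathrm{sat}_i(x)=\mathrm{sign}(x)\min\{|x|,s_i\}$. The graph is connected if for any two nodes there is a path of edges $\{i,j\}$ with $\alpha_{ij}>0$ joining them. Consensus is achieved if there exists $C\in\mathbb R$ with $\lim_{t\to\infty}x_i(t)=C$ for all $i\in\mathcal V$. *)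

From Stdlib Require Import Reals Lra Relations.
Open Scope R_scope.

Fixpoint sumN (n : nat) (f : nat -> R) : R :=
  match n with
  | O => 0
  | S k => sumN k f + f k
  end.

(* min_{i=0}^{n-1} f i  (value for n = 0 is irrelevant) *)
Fixpoint minN (n : nat) (f : nat -> R) : R :=
  match n with
  | O => 0
  | S O => f O
  | S k => Rmin (minN k f) (f k)
  end.

Definition sign (x : R) : R :=
  if Rlt_dec 0 x then 1 else if Rlt_dec x 0 then -1 else 0.

Definition sat (s x : R) : R := sign x * Rmin (Rabs x) s.

Definition edge (N : nat) (alpha : nat -> nat -> R) (i j : nat) : Prop :=
  (i < N)%nat /\ (j < N)%nat /\ alpha i j > 0.

Definition connected (N : nat) (alpha : nat -> nat -> R) : Prop :=
  forall i j, (i < N)%nat -> (j < N)%nat -> clos_refl_trans nat (edge N alpha) i j.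

Definition is_solution (N : nat) (alpha : nat -> nat -> R) (s : nat -> R)
    (t0 : R) (x : R -> nat -> R) : Prop :=
  (forall i, (i < N)%nat -> forall t, t0 < t ->
     derivable_pt_lim (fun tau => x tau i) t
       (sumN N (fun j => alpha i j * (sat (s j) (x t j) - sat (s i) (x t i))))) /\
  (forall i, (i < N)%nat -> forall eps, eps > 0 -> exists delta, delta > 0 /\
     forall t, t0 <= t < t0 + delta -> Rabs (x t i - x t0 i) < eps).

Definition consensus (N : nat) (x : R -> nat -> R) : Prop :=
  exists C : R, forall i, (i < N)%nat ->
    forall eps, eps > 0 -> exists T, forall t, t >= T -> Rabs (x t i - C) < eps.

From Stdlib Require Import Reals Lra Relations Lia Classical.
Open Scope R_scope.

(* Symmetric weights conserve the sum of the states, so the mean [c] of the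
   initial state is the only possible consensus value.  The energy
   [sum_i Phi_i (x_i)], with [Phi_i] the primitive of [sat_i], decreases at
   rate [1/2 sum_ij alpha_ij (y_i - y_j)^2]; this forces the outputs of
   adjacent agents, hence by connectivity of all agents, to synchronize.
   If [|c| <= min s_i], the mean is bracketed by the outputs, so the outputs
   tend to [c], and since the sum is fixed the states are pinned to [c] too.
   If instead the states tend to some [C] with [|C| > min s_i], synchronized
   outputs force all [s_i] to be equal and below [|C|]; above the common
   saturation level the dynamics is frozen, and a backward continuity argument
   shows that it is frozen from [t0] on, so [x(t0)] was already a consensus. *)

(** * Finite sums *)

Lemma sumN_ext n f g : (forall i, (i < n)%nat -> f i = g i) -> sumN n f = sumN n g.
Proof.
  induction n as [|n IH]; intros H; simpl; [reflexivity|].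
  rewrite IH, H; [reflexivity | lia | intros; apply H; lia].
Qed.

Lemma sumN_le n f g : (forall i, (i < n)%nat -> f i <= g i) -> sumN n f <= sumN n g.
Proof.
  induction n as [|n IH]; intros H; simpl; [lra|].
  assert (f n <= g n) by (apply H; lia).
  assert (sumN n f <= sumN n g) by (apply IH; intros; apply H; lia).
  lra.
Qed.

Lemma sumN_lt n f g :
  (0 < n)%nat -> (forall i, (i < n)%nat -> f i < g i) -> sumN n f < sumN n g.
Proof.
  intros Hn H; destruct n as [|n]; [lia|]; simpl.
  assert (f n < g n) by (apply H; lia).
  assert (sumN n f <= sumN n g) by (apply sumN_le; intros; left; apply H; lia).
  lra.
Qed.

Lemma sumN_plus n f g : sumN n (fun i => f i + g i) = sumN n f + sumN n g.
Proof. induction n; simpl; lra. Qed.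

Lemma sumN_opp n f : sumN n (fun i => - f i) = - sumN n f.
Proof. induction n; simpl; lra. Qed.

Lemma sumN_minus n f g : sumN n (fun i => f i - g i) = sumN n f - sumN n g.
Proof. induction n; simpl; lra. Qed.

Lemma sumN_scal n c f : sumN n (fun i => c * f i) = c * sumN n f.
Proof. induction n; simpl; lra. Qed.

Lemma sumN_const n c : sumN n (fun _ => c) = INR n * c.
Proof. induction n; simpl sumN; [simpl; lra | rewrite S_INR; lra]. Qed.

Lemma Rabs_sumN_le n f : Rabs (sumN n f) <= sumN n (fun i => Rabs (f i)).
Proof.
  induction n; simpl; [rewrite Rabs_R0; lra|].
  eapply Rle_trans; [apply Rabs_triang | lra].
Qed.

Lemma sumN_nonneg n f : (forall i, (i < n)%nat -> 0 <= f i) -> 0 <= sumN n f.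
Proof.
  intros H; rewrite <- (Rmult_0_r (INR n)), <- sumN_const; apply sumN_le; auto.
Qed.

Lemma sumN_term_le n f k :
  (forall i, (i < n)%nat -> 0 <= f i) -> (k < n)%nat -> f k <= sumN n f.
Proof.
  induction n as [|n IH]; intros H Hk; [lia|]; simpl.
  assert (0 <= f n) by (apply H; lia).
  destruct (Nat.eq_dec k n) as [->|Hkn].
  - assert (0 <= sumN n f) by (apply sumN_nonneg; intros; apply H; lia); lra.
  - assert (f k <= sumN n f) by (apply IH; [intros; apply H|]; lia); lra.
Qed.

Lemma sumN_swap n m f :
  sumN n (fun i => sumN m (fun j => f i j)) = sumN m (fun j => sumN n (fun i => f i j)).
Proof.
  induction n as [|n IH]; simpl.
  - rewrite sumN_const; ring.
  - rewrite IH, <- sumN_plus; reflexivity.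
Qed.

Lemma minN_le n f k : (k < n)%nat -> minN n f <= f k.
Proof.
  induction n as [|[|n] IH]; intros Hk; [lia | replace k with 0%nat by lia; simpl; lra|].
  change (minN (S (S n)) f) with (Rmin (minN (S n) f) (f (S n))).
  destruct (Nat.eq_dec k (S n)) as [->|]; [apply Rmin_r|].
  eapply Rle_trans; [apply Rmin_l | apply IH; lia].
Qed.

Lemma minN_attained n f : (0 < n)%nat -> exists k, (k < n)%nat /\ minN n f = f k.
Proof.
  induction n as [|[|n] IH]; intros Hn; [lia | exists 0%nat; split; [lia | reflexivity]|].
  change (minN (S (S n)) f) with (Rmin (minN (S n) f) (f (S n))).
  destruct (IH ltac:(lia)) as [k [Hk E]]; unfold Rmin; destruct Rle_dec.
  - exists k; split; [lia | exact E].
  - exists (S n); split; [lia | reflexivity].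
Qed.

(** * Limits at infinity *)

Definition eventually (P : R -> Prop) : Prop := exists T, forall t, t >= T -> P t.

Definition tends_to (f : R -> R) (l : R) : Prop :=
  forall eps, eps > 0 -> eventually (fun t => Rabs (f t - l) < eps).

Definition right_cont_at (f : R -> R) (a : R) : Prop :=
  forall eps, eps > 0 -> exists delta, delta > 0 /\
    forall t, a <= t < a + delta -> Rabs (f t - f a) < eps.

Lemma eventually_and (P Q : R -> Prop) :
  eventually P -> eventually Q -> eventually (fun t => P t /\ Q t).
Proof.
  intros [T1 H1] [T2 H2]; exists (Rmax T1 T2); intros t Ht.
  pose proof (Rmax_l T1 T2); pose proof (Rmax_r T1 T2).
  split; [apply H1 | apply H2]; lra.
Qed.

Lemma eventually_mono (P Q : R -> Prop) :
  (forall t, P t -> Q t) -> eventually P -> eventually Q.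
Proof. intros HPQ [T HT]; exists T; auto. Qed.

Lemma eventually_ge a : eventually (fun t => t >= a).
Proof. exists a; auto. Qed.

Lemma eventually_forall_lt n (P : nat -> R -> Prop) :
  (forall i, (i < n)%nat -> eventually (P i)) ->
  eventually (fun t => forall i, (i < n)%nat -> P i t).
Proof.
  induction n as [|n IH]; intros H; [exists 0; intros; lia|].
  apply (eventually_mono (fun t => (forall i, (i < n)%nat -> P i t) /\ P n t)).
  - intros t [Hlt Hn] i Hi; destruct (Nat.eq_dec i n) as [->|]; auto; apply Hlt; lia.
  - apply eventually_and; [apply IH; intros|]; apply H; lia.
Qed.

Lemma eq_of_forall_Rabs_lt a b : (forall eps, eps > 0 -> Rabs (a - b) < eps) -> a = b.
Proof.
  intros H; destruct (Req_dec a b) as [|Hab]; auto.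
  pose proof (H (Rabs (a - b)) ltac:(apply Rabs_pos_lt; lra)); lra.
Qed.

Lemma tends_to_const c : tends_to (fun _ => c) c.
Proof. intros eps Heps; exists 0; intros; rewrite Rminus_diag, Rabs_R0; lra. Qed.

Lemma tends_to_plus f g a b :
  tends_to f a -> tends_to g b -> tends_to (fun t => f t + g t) (a + b).
Proof.
  intros Hf Hg eps Heps.
  apply (eventually_mono (fun t => Rabs (f t - a) < eps / 2 /\ Rabs (g t - b) < eps / 2)).
  - intros t [Ht1 Ht2].
    replace (f t + g t - (a + b)) with ((f t - a) + (g t - b)) by ring.
    eapply Rle_lt_trans; [apply Rabs_triang | lra].
  - apply eventually_and; [apply Hf | apply Hg]; lra.
Qed.

Lemma tends_to_opp f a : tends_to f a -> tends_to (fun t => - f t) (- a).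
Proof.
  intros Hf eps Heps; eapply eventually_mono; [intros t Ht | exact (Hf eps Heps)]; cbv beta in *.
  replace (- f t - - a) with (- (f t - a)) by ring; rewrite Rabs_Ropp; exact Ht.
Qed.

Lemma tends_to_ext f g l : (forall t, f t = g t) -> tends_to f l -> tends_to g l.
Proof.
  intros Hfg Hf eps Heps; eapply eventually_mono; [intros t Ht | exact (Hf eps Heps)].
  rewrite <- Hfg; exact Ht.
Qed.

Lemma tends_to_sumN n (f : R -> nat -> R) (l : nat -> R) :
  (forall i, (i < n)%nat -> tends_to (fun t => f t i) (l i)) ->
  tends_to (fun t => sumN n (f t)) (sumN n l).
Proof.
  induction n as [|n IH]; intros H; simpl; [apply tends_to_const|].
  apply tends_to_plus; [apply IH; intros|]; apply H; lia.
Qed.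

Lemma tends_to_unique f a b : tends_to f a -> tends_to f b -> a = b.
Proof.
  intros Ha Hb; apply eq_of_forall_Rabs_lt; intros eps Heps.
  destruct (eventually_and _ _ (Ha (eps / 2) ltac:(lra)) (Hb (eps / 2) ltac:(lra)))
    as [T HT].
  destruct (HT T ltac:(lra)) as [H1 H2].
  replace (a - b) with ((f T - b) - (f T - a)) by ring.
  eapply Rle_lt_trans; [apply Rabs_triang|]; rewrite Rabs_Ropp; lra.
Qed.

Lemma eq_limit_of_const_tail f l T :
  tends_to f l -> (forall a b, T < a <= b -> f b = f a) -> forall t, T < t -> f t = l.
Proof.
  intros Hf Hconst t Ht; apply (tends_to_unique f); [|exact Hf].
  intros eps Heps; exists t; intros u Hu.
  rewrite (Hconst t u) by lra; rewrite Rminus_diag, Rabs_R0; lra.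
Qed.

Lemma tends_to_lipschitz (g : R -> R) f a :
  (forall u v, Rabs (g u - g v) <= Rabs (u - v)) ->
  tends_to f a -> tends_to (fun t => g (f t)) (g a).
Proof.
  intros Hg Hf eps Heps; eapply eventually_mono; [intros t Ht | exact (Hf eps Heps)].
  eapply Rle_lt_trans; [apply Hg | exact Ht].
Qed.

Lemma derivable_cont_ball f a l :
  derivable_pt_lim f a l -> forall eps, eps > 0 ->
  exists d, d > 0 /\ forall t, Rabs (t - a) < d -> Rabs (f t - f a) < eps.
Proof.
  intros Hd eps Heps.
  assert (Hc : continuity_pt f a) by (apply derivable_continuous_pt; exists l; exact Hd).
  destruct (Hc eps Heps) as [d [Hd0 Hd1]]; exists d; split; [exact Hd0|].
  intros t Ht; destruct (Req_dec t a) as [->|Hta].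
  - rewrite Rminus_diag, Rabs_R0; lra.
  - apply (Hd1 t); split; [split; [exact I | auto] | exact Ht].
Qed.

Lemma derivable_right_cont f a l : derivable_pt_lim f a l -> right_cont_at f a.
Proof.
  intros Hd eps Heps; destruct (derivable_cont_ball f a l Hd eps Heps) as [d [Hd0 Hd1]].
  exists d; split; [exact Hd0|]; intros t Ht; apply Hd1; rewrite Rabs_right; lra.
Qed.

Lemma exists_pos_forall_lt n (P : nat -> R -> Prop) :
  (forall i d d', 0 < d' <= d -> P i d -> P i d') ->
  (forall i, (i < n)%nat -> exists d, d > 0 /\ P i d) ->
  exists d, d > 0 /\ forall i, (i < n)%nat -> P i d.
Proof.
  intros Hmono; induction n as [|n IH]; intros H; [exists 1; split; [lra | intros; lia]|].
  destruct IH as [d1 [Hd1 H1]]; [intros; apply H; lia|].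
  destruct (H n ltac:(lia)) as [d2 [Hd2 H2]].
  assert (0 < Rmin d1 d2) by (apply Rmin_glb_lt; lra).
  exists (Rmin d1 d2); split; [lra|]; intros i Hi.
  destruct (Nat.eq_dec i n) as [->|].
  - apply (Hmono n d2); [split; [lra | apply Rmin_r] | exact H2].
  - apply (Hmono i d1); [split; [lra | apply Rmin_l] | apply H1; lia].
Qed.

Lemma right_cont_sumN n (f : R -> nat -> R) a :
  (forall i, (i < n)%nat -> right_cont_at (fun t => f t i) a) ->
  right_cont_at (fun t => sumN n (f t)) a.
Proof.
  induction n as [|n IH]; intros H eps Heps; simpl.
  - exists 1; split; [lra|]; intros; rewrite Rminus_diag, Rabs_R0; lra.
  - destruct (IH ltac:(intros; apply H; lia) (eps / 2) ltac:(lra)) as [d1 [Hd1 H1]].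
    destruct (H n ltac:(lia) (eps / 2) ltac:(lra)) as [d2 [Hd2 H2]].
    exists (Rmin d1 d2); split; [apply Rmin_glb_lt; lra|]; intros t Ht.
    pose proof (Rmin_l d1 d2); pose proof (Rmin_r d1 d2).
    specialize (H1 t ltac:(lra)); specialize (H2 t ltac:(lra)).
    replace (sumN n (f t) + f t n - (sumN n (f a) + f a n))
      with ((sumN n (f t) - sumN n (f a)) + (f t n - f a n)) by ring.
    eapply Rle_lt_trans; [apply Rabs_triang | simpl in *; lra].
Qed.

Lemma right_cont_eq_of_const f a b :
  right_cont_at f a -> a < b -> (forall u, a < u <= b -> f u = f b) -> f b = f a.
Proof.
  intros Hf Hab Hconst; apply eq_of_forall_Rabs_lt; intros eps Heps.
  destruct (Hf eps Heps) as [d [Hd Hfd]].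
  set (u := a + Rmin d (b - a) / 2).
  assert (0 < Rmin d (b - a)) by (apply Rmin_glb_lt; lra).
  pose proof (Rmin_l d (b - a)); pose proof (Rmin_r d (b - a)).
  rewrite <- (Hconst u) by (unfold u; lra); apply Hfd; unfold u; lra.
Qed.

Lemma eq_of_derivative_zero f a b :
  a <= b -> (forall c, a <= c <= b -> derivable_pt_lim f c 0) -> f b = f a.
Proof.
  intros Hab Hd; destruct (Req_dec a b) as [->|Hne]; [reflexivity|].
  destruct (MVT_cor2 f (fun _ => 0) a b) as [c [E _]]; [lra | exact Hd | lra].
Qed.

Lemma derivable_pt_lim_sumN n (f : R -> nat -> R) (f' : nat -> R) t :
  (forall i, (i < n)%nat -> derivable_pt_lim (fun u => f u i) t (f' i)) ->
  derivable_pt_lim (fun u => sumN n (f u)) t (sumN n f').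
Proof.
  induction n as [|n IH]; intros H; simpl; [apply derivable_pt_lim_const|].
  apply (derivable_pt_lim_plus (fun u => sumN n (f u)) (fun u => f u n));
    [apply IH; intros|]; apply H; lia.
Qed.

Lemma not_eventually_not (P : R -> Prop) :
  ~ eventually (fun t => ~ P t) -> forall T, exists t, t >= T /\ P t.
Proof.
  intros Hn T; apply NNPP; intros Hno; apply Hn; exists T; intros t Ht HP.
  apply Hno; exists t; auto.
Qed.

Lemma eventually_not_of_decrease (V : R -> R) (bad : R -> Prop) t1 d k :
  0 < k -> 0 <= d ->
  (forall t, t1 <= t -> 0 <= V t) ->
  (forall t u, t1 <= t <= u -> V u <= V t) ->
  (forall t, t1 <= t -> bad t -> V (t + d) <= V t - k) ->
  eventually (fun t => ~ bad t).
Proof.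
  intros Hk Hd Hpos Hmono Hdrop; apply NNPP; intros Hn.
  pose proof (not_eventually_not _ Hn) as Hbad.
  assert (Hiter : forall n : nat, exists T, T >= t1 /\ V T <= V t1 - INR n * k).
  { induction n as [|n [T [HT HV]]]; [exists t1; simpl; lra|].
    destruct (Hbad T) as [t [Ht Hb]]; exists (t + d); split; [lra|].
    pose proof (Hdrop t ltac:(lra) Hb); pose proof (Hmono T t ltac:(lra)).
    rewrite S_INR; lra. }
  destruct (INR_archimed k (V t1) Hk) as [n Hn2].
  destruct (Hiter n) as [T [HT HV]]; pose proof (Hpos T ltac:(lra)); lra.
Qed.

(* Continuous induction, run backwards from [+oo] down to [t0]. *)
Lemma backward_induction t0 (Q : R -> Prop) :
  (exists T, forall t, t > T -> Q t) ->
  (forall u, t0 < u -> (forall t, t > u -> Q t) ->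
     exists d, d > 0 /\ forall t, t > u - d -> Q t) ->
  forall t, t > t0 -> Q t.
Proof.
  intros [T HT] Hstep.
  set (P := fun u => u >= t0 /\ forall t, t > u -> Q t).
  (* [- L] is the infimum of the admissible starting points [u] of the tail. *)
  destruct (completeness (fun v => P (- v))) as [L [HL1 HL2]].
  { exists (- t0); intros v [Hv _]; lra. }
  { exists (- Rmax T t0); rewrite Ropp_involutive; split; [apply Rle_ge, Rmax_r|].
    intros t Ht; apply HT; pose proof (Rmax_l T t0); lra. }
  assert (Htau0 : t0 <= - L) by (assert (L <= - t0) by (apply HL2; intros v [Hv _]; lra); lra).
  assert (Htail : forall t, t > - L -> Q t).
  { intros t Ht; apply NNPP; intros HQ.
    assert (L <= - t); [|lra].
    apply HL2; intros v [_ Hv]; apply Rnot_lt_le; intros Hlt; apply HQ, Hv; lra. }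
  destruct (Rle_lt_or_eq_dec _ _ Htau0) as [Hlt|Heq]; [exfalso|].
  - destruct (Hstep (- L) Hlt Htail) as [d [Hd Hd2]].
    pose proof (Rmax_l t0 (- L - d / 2)); pose proof (Rmax_r t0 (- L - d / 2)).
    set (u := Rmax t0 (- L - d / 2)) in *.
    assert (Hu : P u) by (split; [lra | intros t Ht; apply Hd2; lra]).
    assert (- u <= L) by (apply HL1; rewrite Ropp_involutive; exact Hu).
    unfold u, Rmax in *; destruct Rle_dec; lra.
  - intros t Ht; apply Htail; lra.
Qed.

(** * Saturation *)

Lemma sat_clamp s z :
  0 < s -> sat s z = (if Rle_dec s z then s else if Rle_dec z (- s) then - s else z).
Proof.
  intros Hs; unfold sat, sign, Rmin.
  destruct (Rlt_dec 0 z), (Rle_dec s z); try destruct (Rle_dec z (- s));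
    try destruct (Rlt_dec z 0); destruct (Rle_dec (Rabs z) s);
    unfold Rabs in *; destruct (Rcase_abs z); lra.
Qed.

Ltac destruct_sat s z Hs :=
  rewrite (sat_clamp s z Hs); destruct (Rle_dec s z); try destruct (Rle_dec z (- s)).

Lemma Rabs_sat_le s z : 0 < s -> Rabs (sat s z) <= s.
Proof. intros Hs; destruct_sat s z Hs; unfold Rabs; destruct Rcase_abs; lra. Qed.

Lemma sat_lipschitz s a b : 0 < s -> Rabs (sat s a - sat s b) <= Rabs (a - b).
Proof.
  intros Hs; destruct_sat s a Hs; destruct_sat s b Hs;
    unfold Rabs; repeat destruct Rcase_abs; lra.
Qed.

Lemma sat_opp s z : 0 < s -> sat s (- z) = - sat s z.
Proof. intros Hs; destruct_sat s z Hs; destruct_sat s (- z) Hs; lra. Qed.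

Lemma sat_ge s z : 0 < s -> s <= z -> sat s z = s.
Proof. intros Hs; destruct_sat s z Hs; lra. Qed.

Lemma lt_of_lt_sat s z a : 0 < s -> - s <= a -> a < sat s z -> a < z.
Proof. intros Hs; destruct_sat s z Hs; lra. Qed.

Lemma lt_of_sat_lt s z : 0 < s -> sat s z < z -> s < z.
Proof. intros Hs; destruct_sat s z Hs; lra. Qed.

Definition sat_primitive (s z : R) : R :=
  if Rle_dec s z then s * z - s * s / 2
  else if Rle_dec z (- s) then - s * z - s * s / 2 else z * z / 2.

Lemma sat_primitive_nonneg s z : 0 < s -> 0 <= sat_primitive s z.
Proof. intros Hs; unfold sat_primitive; destruct (Rle_dec s z); try destruct (Rle_dec z (- s)); nra. Qed.

Lemma sat_primitive_increment s a b :
  0 < s ->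
  sat s a * (b - a) <= sat_primitive s b - sat_primitive s a <= sat s b * (b - a).
Proof.
  intros Hs; unfold sat_primitive.
  pose proof (pow2_ge_0 (b - a)); pose proof (pow2_ge_0 (b - s));
    pose proof (pow2_ge_0 (a - s)); pose proof (pow2_ge_0 (b + s));
    pose proof (pow2_ge_0 (a + s)).
  destruct_sat s a Hs; destruct_sat s b Hs; split; nra.
Qed.

Lemma sat_primitive_derivative s z :
  0 < s -> derivable_pt_lim (sat_primitive s) z (sat s z).
Proof.
  (* The difference quotient lies between [sat s z] and [sat s (z + h)], which
     differ by at most [|h|]. *)
  intros Hs eps Heps; exists (mkposreal eps Heps); intros h Hh Hhd; simpl in Hhd.
  destruct (sat_primitive_increment s z (z + h) Hs) as [Hlo Hhi].
  pose proof (sat_lipschitz s (z + h) z Hs) as Hlip.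
  replace (z + h - z) with h in * by ring.
  apply Rle_lt_trans with (Rabs h); [|exact Hhd].
  set (q := (sat_primitive s (z + h) - sat_primitive s z) / h).
  assert (Hq : q * h = sat_primitive s (z + h) - sat_primitive s z)
    by (unfold q; field; exact Hh).
  assert (Hbetween : Rmin (sat s z) (sat s (z + h)) <= q <= Rmax (sat s z) (sat s (z + h))).
  { destruct (Rlt_dec 0 h).
    - assert (sat s z <= q <= sat s (z + h)) by (split; apply Rmult_le_reg_r with h; lra).
      unfold Rmin, Rmax; destruct Rle_dec; lra.
    - assert (sat s (z + h) <= q <= sat s z) by (split; apply Rmult_le_reg_r with (- h); lra).
      unfold Rmin, Rmax; destruct Rle_dec; lra. }
  unfold Rmin, Rmax in Hbetween; destruct Rle_dec;
    unfold Rabs in *; repeat destruct Rcase_abs; lra.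
Qed.

(** * Symmetric weights and averages *)

Lemma laplacian_sum_zero n (a : nat -> nat -> R) (y : nat -> R) :
  (forall i j, (i < n)%nat -> (j < n)%nat -> a i j = a j i) ->
  sumN n (fun i => sumN n (fun j => a i j * (y j - y i))) = 0.
Proof.
  intros Hsym.
  enough (E : sumN n (fun i => sumN n (fun j => a i j * (y j - y i))) =
              - sumN n (fun i => sumN n (fun j => a i j * (y j - y i)))) by lra.
  rewrite sumN_swap at 1; rewrite <- sumN_opp; apply sumN_ext; intros j Hj.
  rewrite <- sumN_opp; apply sumN_ext; intros i Hi; rewrite Hsym by auto; ring.
Qed.

Lemma laplacian_quadratic_form n (a : nat -> nat -> R) (y : nat -> R) :
  (forall i j, (i < n)%nat -> (j < n)%nat -> a i j = a j i) ->
  sumN n (fun i => y i * sumN n (fun j => a i j * (y j - y i))) =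
  - / 2 * sumN n (fun i => sumN n (fun j => a i j * (y i - y j) ^ 2)).
Proof.
  intros Hsym.
  set (A := sumN n (fun i => y i * sumN n (fun j => a i j * (y j - y i)))).
  assert (E1 : A = sumN n (fun i => sumN n (fun j => a i j * y i * (y j - y i)))).
  { unfold A; apply sumN_ext; intros; rewrite <- sumN_scal; apply sumN_ext; intros; ring. }
  assert (E2 : A = sumN n (fun i => sumN n (fun j => a i j * y j * (y i - y j)))).
  { rewrite E1, sumN_swap; apply sumN_ext; intros j Hj; apply sumN_ext; intros i Hi.
    rewrite Hsym by auto; ring. }
  assert (E3 : A + A = - sumN n (fun i => sumN n (fun j => a i j * (y i - y j) ^ 2))).
  { rewrite E1 at 1; rewrite E2, <- sumN_plus, <- sumN_opp; apply sumN_ext; intros.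
    rewrite <- sumN_plus, <- sumN_opp; apply sumN_ext; intros; ring. }
  lra.
Qed.

Lemma exists_sat_le_mean n s z c :
  (0 < n)%nat -> (forall k, (k < n)%nat -> 0 < s k /\ - s k <= c) ->
  sumN n z = INR n * c -> exists k, (k < n)%nat /\ sat (s k) (z k) <= c.
Proof.
  intros Hn Hs Hsum; apply NNPP; intros Hno.
  assert (INR n * c < sumN n z); [|lra].
  rewrite <- sumN_const; apply sumN_lt; [exact Hn|]; intros k Hk.
  destruct (Hs k Hk) as [Hsk Hc]; apply (lt_of_lt_sat (s k)); [exact Hsk | exact Hc|].
  apply Rnot_le_lt; intros Hle; apply Hno; exists k; auto.
Qed.

Lemma exists_sat_ge_mean n s z c :
  (0 < n)%nat -> (forall k, (k < n)%nat -> 0 < s k /\ c <= s k) ->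
  sumN n z = INR n * c -> exists k, (k < n)%nat /\ c <= sat (s k) (z k).
Proof.
  intros Hn Hs Hsum.
  destruct (exists_sat_le_mean n s (fun k => - z k) (- c) Hn) as [k [Hk Hle]].
  - intros k Hk; destruct (Hs k Hk); split; lra.
  - rewrite sumN_opp, Hsum; ring.
  - exists k; split; [exact Hk|]; rewrite sat_opp in Hle by (apply Hs; exact Hk); lra.
Qed.

(* If the outputs are pairwise [e]-close, they are all [e]-close to the mean of
   the states, since the mean lies between the smallest and the largest output. *)
Lemma Rabs_sat_sub_mean_lt n s z c e :
  (0 < n)%nat -> (forall k, (k < n)%nat -> 0 < s k /\ Rabs c <= s k) ->
  sumN n z = INR n * c ->
  (forall i j, (i < n)%nat -> (j < n)%nat -> Rabs (sat (s i) (z i) - sat (s j) (z j)) < e) ->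
  forall i, (i < n)%nat -> Rabs (sat (s i) (z i) - c) < e.
Proof.
  intros Hn Hs Hsum Hclose i Hi.
  assert (Hc : forall k, (k < n)%nat -> - s k <= c <= s k).
  { intros k Hk; destruct (Hs k Hk) as [_ H]; unfold Rabs in H; destruct Rcase_abs; lra. }
  destruct (exists_sat_le_mean n s z c Hn) as [k1 [Hk1 Hle]];
    [intros k Hk; split; [apply Hs | apply Hc]; exact Hk | exact Hsum |].
  destruct (exists_sat_ge_mean n s z c Hn) as [k2 [Hk2 Hge]];
    [intros k Hk; split; [apply Hs | apply Hc]; exact Hk | exact Hsum |].
  pose proof (Rabs_def2 _ _ (Hclose i k1 Hi Hk1)); pose proof (Rabs_def2 _ _ (Hclose i k2 Hi Hk2)).
  apply Rabs_def1; lra.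
Qed.

Lemma le_of_lower_bounds_mean n z a c i :
  (forall k, (k < n)%nat -> a < z k) -> sumN n z = INR n * c -> (i < n)%nat ->
  z i <= a + INR n * (c - a).
Proof.
  intros Hlow Hsum Hi.
  assert (z i - a <= sumN n (fun k => z k - a)).
  { apply (sumN_term_le n (fun k => z k - a)); [intros k Hk; pose proof (Hlow k Hk); lra | exact Hi]. }
  rewrite sumN_minus, sumN_const, Hsum in H; lra.
Qed.

(* Outputs within [e] of the mean [c] pin every state within [n e] of [c]:
   for [c >= 0] the lower bounds on the outputs are unsaturated, so they transfer
   to the states, and the fixed sum then bounds each state from above. *)
Lemma Rabs_sub_mean_lt_nonneg n s z c e :
  0 <= c -> (forall k, (k < n)%nat -> 0 < e <= s k) ->
  sumN n z = INR n * c ->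
  (forall k, (k < n)%nat -> Rabs (sat (s k) (z k) - c) < e) ->
  forall i, (i < n)%nat -> Rabs (z i - c) < INR n * e.
Proof.
  intros Hc Hs Hsum Hclose i Hi.
  assert (Hlow : forall k, (k < n)%nat -> c - e < z k).
  { intros k Hk; destruct (Hs k Hk) as [He Hes].
    apply (lt_of_lt_sat (s k)); [lra | lra|].
    pose proof (Rabs_def2 _ _ (Hclose k Hk)); lra. }
  pose proof (le_of_lower_bounds_mean n z (c - e) c i Hlow Hsum Hi).
  pose proof (Hlow i Hi); destruct (Hs i Hi) as [He _].
  assert (1 <= INR n) by (apply (le_INR 1); lia).
  apply Rabs_def1; nra.
Qed.

Lemma Rabs_sub_mean_lt n s z c e :
  (forall k, (k < n)%nat -> 0 < e <= s k) ->
  sumN n z = INR n * c ->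
  (forall k, (k < n)%nat -> Rabs (sat (s k) (z k) - c) < e) ->
  forall i, (i < n)%nat -> Rabs (z i - c) < INR n * e.
Proof.
  intros Hs Hsum Hclose i Hi.
  destruct (Rle_dec 0 c) as [Hc|Hc]; [apply (Rabs_sub_mean_lt_nonneg n s); auto|].
  replace (z i - c) with (- (- z i - - c)) by ring; rewrite Rabs_Ropp.
  apply (Rabs_sub_mean_lt_nonneg n s (fun k => - z k) (- c)); auto; [lra | |].
  - rewrite sumN_opp, Hsum; ring.
  - intros k Hk; rewrite sat_opp by (destruct (Hs k Hk); lra).
    replace (- sat (s k) (z k) - - c) with (- (sat (s k) (z k) - c)) by ring.
    rewrite Rabs_Ropp; apply Hclose, Hk.
Qed.

(** * The saturated network *)

Section Saturated_network.

Variables (N : nat) (alpha : nat -> nat -> R) (s : nat -> R) (t0 : R) (x : R -> nat -> R).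

Hypothesis alpha_sym : forall i j, (i < N)%nat -> (j < N)%nat -> alpha i j = alpha j i.
Hypothesis alpha_ge0 : forall i j, (i < N)%nat -> (j < N)%nat -> 0 <= alpha i j.
Hypothesis s_gt0 : forall i, (i < N)%nat -> 0 < s i.
Hypothesis x_solution : is_solution N alpha s t0 x.

Definition output t i := sat (s i) (x t i).

Definition flow t i := sumN N (fun j => alpha i j * (output t j - output t i)).

Definition flow_bound i := sumN N (fun j => alpha i j * (s j + s i)).

Definition energy t := sumN N (fun i => sat_primitive (s i) (x t i)).

Definition dissipation t :=
  sumN N (fun i => sumN N (fun j => alpha i j * (output t i - output t j) ^ 2)).

Lemma x_derivative i t :
  (i < N)%nat -> t0 < t -> derivable_pt_lim (fun u => x u i) t (flow t i).
Proof. intros Hi Ht; exact (proj1 x_solution i Hi t Ht). Qed.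

Lemma Rabs_flow_le i t : (i < N)%nat -> Rabs (flow t i) <= flow_bound i.
Proof.
  intros Hi; eapply Rle_trans; [apply Rabs_sumN_le|]; apply sumN_le; intros j Hj.
  rewrite Rabs_mult, (Rabs_right (alpha i j)) by (apply Rle_ge, alpha_ge0; auto).
  apply Rmult_le_compat_l; [apply alpha_ge0; auto|].
  pose proof (Rabs_sat_le (s j) (x t j) (s_gt0 j Hj)).
  pose proof (Rabs_sat_le (s i) (x t i) (s_gt0 i Hi)).
  eapply Rle_trans; [apply Rabs_triang|]; rewrite Rabs_Ropp; unfold output; lra.
Qed.

Lemma flow_bound_nonneg i : (i < N)%nat -> 0 <= flow_bound i.
Proof. intros Hi; eapply Rle_trans; [apply Rabs_pos | apply (Rabs_flow_le i t0 Hi)]. Qed.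

Lemma x_lipschitz i t u :
  (i < N)%nat -> t0 < t <= u -> Rabs (x u i - x t i) <= flow_bound i * (u - t).
Proof.
  intros Hi Htu; destruct (Req_dec t u) as [<-|Hne].
  - rewrite !Rminus_diag, Rabs_R0; lra.
  - destruct (MVT_cor2 (fun v => x v i) (fun v => flow v i) t u) as [c [E Hc]];
      [lra | intros; apply x_derivative; auto; lra |].
    rewrite E, Rabs_mult, (Rabs_right (u - t)) by lra.
    apply Rmult_le_compat_r; [lra | apply Rabs_flow_le, Hi].
Qed.

Lemma output_diff_lipschitz i j t u :
  (i < N)%nat -> (j < N)%nat -> t0 < t <= u ->
  Rabs ((output u i - output u j) - (output t i - output t j))
    <= (flow_bound i + flow_bound j) * (u - t).
Proof.
  intros Hi Hj Htu; unfold output.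
  pose proof (x_lipschitz i t u Hi Htu); pose proof (x_lipschitz j t u Hj Htu).
  pose proof (sat_lipschitz (s i) (x u i) (x t i) (s_gt0 i Hi)).
  pose proof (sat_lipschitz (s j) (x u j) (x t j) (s_gt0 j Hj)).
  replace (sat (s i) (x u i) - sat (s j) (x u j) - (sat (s i) (x t i) - sat (s j) (x t j)))
    with ((sat (s i) (x u i) - sat (s i) (x t i)) - (sat (s j) (x u j) - sat (s j) (x t j)))
    by ring.
  eapply Rle_trans; [apply Rabs_triang|]; rewrite Rabs_Ropp; lra.
Qed.

Lemma sum_x_const t : t0 <= t -> sumN N (x t) = sumN N (x t0).
Proof.
  intros Ht; destruct (Req_dec t0 t) as [<-|Hne]; [reflexivity|].
  apply (right_cont_eq_of_const (fun u => sumN N (x u))); [| lra |].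
  - apply right_cont_sumN; intros i Hi; exact (proj2 x_solution i Hi).
  - intros u Hu; symmetry; apply (eq_of_derivative_zero (fun v => sumN N (x v))); [lra|].
    intros c Hc; rewrite <- (laplacian_sum_zero N alpha (output c) alpha_sym).
    apply (derivable_pt_lim_sumN N x); intros i Hi; apply x_derivative; auto; lra.
Qed.

Lemma energy_derivative t : t0 < t -> derivable_pt_lim energy t (- / 2 * dissipation t).
Proof.
  intros Ht; unfold dissipation; rewrite <- laplacian_quadratic_form by exact alpha_sym.
  apply (derivable_pt_lim_sumN N (fun u i => sat_primitive (s i) (x u i))); intros i Hi.
  apply (derivable_pt_lim_comp (fun u => x u i) (sat_primitive (s i))).
  - apply x_derivative; auto.
  - apply sat_primitive_derivative, s_gt0, Hi.
Qed.

Lemma energy_nonneg t : 0 <= energy t.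
Proof. apply sumN_nonneg; intros i Hi; apply sat_primitive_nonneg, s_gt0, Hi. Qed.

Lemma dissipation_ge_edge t i j :
  (i < N)%nat -> (j < N)%nat -> alpha i j * (output t i - output t j) ^ 2 <= dissipation t.
Proof.
  assert (Hterm : forall i j, (i < N)%nat -> (j < N)%nat ->
            0 <= alpha i j * (output t i - output t j) ^ 2)
    by (intros; apply Rmult_le_pos; [apply alpha_ge0; auto | apply pow2_ge_0]).
  intros Hi Hj; eapply Rle_trans.
  - apply (sumN_term_le N (fun j => alpha i j * (output t i - output t j) ^ 2)); auto.
  - apply (sumN_term_le N (fun i => sumN N (fun j => alpha i j * (output t i - output t j) ^ 2)));
      auto; intros k Hk; apply sumN_nonneg; auto.
Qed.

Lemma dissipation_nonneg t : (0 < N)%nat -> 0 <= dissipation t.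
Proof.
  intros HN; eapply Rle_trans; [|apply (dissipation_ge_edge t 0 0 HN HN)].
  apply Rmult_le_pos; [apply alpha_ge0; auto | apply pow2_ge_0].
Qed.

Lemma energy_increment t u : t0 < t <= u ->
  exists c, t <= c <= u /\ energy u - energy t = - / 2 * dissipation c * (u - t).
Proof.
  intros Htu; destruct (Req_dec t u) as [<-|Hne].
  - exists t; split; [lra | ring].
  - destruct (MVT_cor2 energy (fun c => - / 2 * dissipation c) t u) as [c [E Hc]];
      [lra | intros; apply energy_derivative; lra |].
    exists c; split; [lra | rewrite E; ring].
Qed.

Lemma energy_noninc t u : (0 < N)%nat -> t0 < t <= u -> energy u <= energy t.
Proof.
  intros HN Htu; destruct (energy_increment t u Htu) as [c [_ E]].
  pose proof (dissipation_nonneg c HN); nra.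
Qed.

(* While the outputs of an edge differ by [eps], the energy decreases at rate
   at least [alpha i j eps^2 / 8] on a window of length [d] over which the
   difference, being Lipschitz, stays above [eps / 2]. *)
Lemma output_sync_edge i j :
  (i < N)%nat -> (j < N)%nat -> alpha i j > 0 ->
  tends_to (fun t => output t i - output t j) 0.
Proof.
  intros Hi Hj Ha eps Heps.
  set (L := flow_bound i + flow_bound j).
  assert (HL : 0 <= L) by (pose proof (flow_bound_nonneg i Hi); pose proof (flow_bound_nonneg j Hj); unfold L; lra).
  set (d := eps / (2 * (L + 1))).
  assert (Hd : 0 < d) by (unfold d; apply Rdiv_lt_0_compat; lra).
  assert (HLd : L * d < eps / 2).
  { unfold d; apply Rmult_lt_reg_r with (2 * (L + 1)); [lra|].
    replace (L * (eps / (2 * (L + 1))) * (2 * (L + 1))) with (L * eps) by (field; lra); nra. }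
  set (k := / 2 * alpha i j * (eps / 2) ^ 2 * d).
  assert (Hk : 0 < k) by (unfold k; pose proof (pow_lt (eps / 2) 2 ltac:(lra)); apply Rmult_lt_0_compat; nra).
  apply (eventually_mono (fun t => ~ eps <= Rabs (output t i - output t j)));
    [intros t Ht; rewrite Rminus_0_r; lra|].
  apply (eventually_not_of_decrease energy _ (t0 + 1) d k Hk ltac:(lra));
    [intros; apply energy_nonneg | intros; apply energy_noninc; lia || lra |].
  intros t Ht Hbad.
  destruct (energy_increment t (t + d) ltac:(lra)) as [c [Hc E]].
  pose proof (output_diff_lipschitz i j t c Hi Hj ltac:(lra)) as Hlip; fold L in Hlip.
  assert (L * (c - t) <= L * d) by (apply Rmult_le_compat_l; lra).
  assert (Hyc : eps / 2 <= Rabs (output c i - output c j)).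
  { unfold Rabs in *; repeat destruct Rcase_abs; lra. }
  assert (Hsq : (eps / 2) ^ 2 <= (output c i - output c j) ^ 2).
  { rewrite <- (pow2_abs (output c i - output c j)); apply pow_incr; lra. }
  pose proof (dissipation_ge_edge c i j Hi Hj).
  assert (alpha i j * (eps / 2) ^ 2 <= alpha i j * (output c i - output c j) ^ 2)
    by (apply Rmult_le_compat_l; lra).
  replace (t + d - t) with d in E by ring; unfold k; nra.
Qed.

Lemma edge_path_lt i j : clos_refl_trans nat (edge N alpha) i j -> (i < N)%nat -> (j < N)%nat.
Proof. intros Hpath; induction Hpath as [i j [_ [Hj _]] | | ]; auto. Qed.

Hypothesis alpha_connected : connected N alpha.

Lemma output_sync i j :
  (i < N)%nat -> (j < N)%nat -> tends_to (fun t => output t i - output t j) 0.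
Proof.
  intros Hi Hj; pose proof (alpha_connected i j Hi Hj) as Hpath; revert Hi.
  induction Hpath as [i j [_ [_ Hij]] | i | i l j Hil IHil Hlj IHlj]; intros Hi.
  - apply output_sync_edge; auto.
  - apply (tends_to_ext (fun _ => 0)); [intros; ring | apply tends_to_const].
  - pose proof (edge_path_lt i l Hil Hi) as Hl.
    rewrite <- (Rplus_0_r 0).
    apply (tends_to_ext (fun t => (output t i - output t l) + (output t l - output t j)));
      [intros; ring | apply tends_to_plus; auto].
Qed.

Lemma outputs_near_mean c :
  (0 < N)%nat -> (forall k, (k < N)%nat -> Rabs c <= s k) ->
  (forall t, t >= t0 -> sumN N (x t) = INR N * c) ->
  forall e, e > 0 ->
  eventually (fun t => t >= t0 /\ forall k, (k < N)%nat -> Rabs (output t k - c) < e).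
Proof.
  intros HN Hcs Hmean e He.
  assert (Hsync : eventually (fun t => t >= t0 /\ forall i, (i < N)%nat ->
            forall j, (j < N)%nat -> Rabs (output t i - output t j - 0) < e)).
  { apply eventually_and; [apply eventually_ge|].
    apply eventually_forall_lt; intros i Hi; apply eventually_forall_lt; intros j Hj.
    apply (output_sync i j Hi Hj e He). }
  refine (eventually_mono _ _ _ Hsync); intros t [Ht Hclose].
  split; [exact Ht|]; apply (Rabs_sat_sub_mean_lt N s (x t)); auto.
  intros i j Hi Hj; specialize (Hclose i Hi j Hj); rewrite Rminus_0_r in Hclose; exact Hclose.
Qed.

Lemma consensus_of_mean_le :
  (0 < N)%nat -> / INR N * Rabs (sumN N (x t0)) <= minN N s -> consensus N x.
Proof.
  intros HN Hmin.
  assert (HNr : 0 < INR N) by (apply lt_0_INR, HN).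
  set (c := sumN N (x t0) / INR N).
  assert (Hmean : forall t, t >= t0 -> sumN N (x t) = INR N * c)
    by (intros t Ht; rewrite sum_x_const by lra; unfold c; field; lra).
  set (m := minN N s) in *.
  assert (Hm0 : 0 < m) by (destruct (minN_attained N s HN) as [k [Hk E]]; unfold m; rewrite E; auto).
  assert (Hms : forall k, (k < N)%nat -> m <= s k) by (intros; apply minN_le; auto).
  assert (Hcm : Rabs c <= m).
  { unfold c, Rdiv; rewrite Rabs_mult, Rabs_inv, (Rabs_right (INR N)) by lra; lra. }
  exists c; intros i Hi eps Heps.
  pose proof (Rmin_l (eps / INR N) m); pose proof (Rmin_r (eps / INR N) m).
  set (e := Rmin (eps / INR N) m) in *.
  assert (He : 0 < e) by (apply Rmin_glb_lt; [apply Rdiv_lt_0_compat|]; lra).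
  assert (HNe : INR N * e <= eps).
  { apply Rle_trans with (INR N * (eps / INR N)); [apply Rmult_le_compat_l; lra|].
    right; field; lra. }
  assert (Hcs : forall k, (k < N)%nat -> Rabs c <= s k) by (intros k Hk; pose proof (Hms k Hk); lra).
  refine (eventually_mono _ _ _ (outputs_near_mean c HN Hcs Hmean e He)); intros t [Ht Hclose].
  apply Rlt_le_trans with (INR N * e); [|exact HNe].
  apply (Rabs_sub_mean_lt N s (x t) c e); auto.
  intros k Hk; pose proof (Hms k Hk); lra.
Qed.

Lemma mean_eq_limit C :
  (forall i, (i < N)%nat -> tends_to (fun t => x t i) C) -> sumN N (x t0) = INR N * C.
Proof.
  intros HC; rewrite <- sumN_const.
  apply (tends_to_unique (fun t => sumN N (x t))).
  - intros eps Heps; exists t0; intros t Ht; rewrite sum_x_const, Rminus_diag, Rabs_R0 by lra; lra.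
  - apply (tends_to_sumN N x (fun _ => C)), HC.
Qed.

Section Saturated_limit.

Variables (k : nat) (C : R).
Hypothesis k_lt : (k < N)%nat.
Hypothesis s_lt_C : s k < C.
Hypothesis x_lim : forall i, (i < N)%nat -> tends_to (fun t => x t i) C.

(* Outputs synchronize, so at the limit all agents saturate at the same level,
   which forces all saturation levels to equal [s k]. *)
Lemma s_eq_limit_level i : (i < N)%nat -> s i = s k.
Proof.
  intros Hi.
  assert (Hlim : sat (s i) C - sat (s k) C = 0).
  { apply (tends_to_unique (fun t => output t i - output t k)); [|apply output_sync; auto].
    apply tends_to_plus; [|apply tends_to_opp];
      apply tends_to_lipschitz; auto; intros; apply sat_lipschitz, s_gt0; auto. }
  rewrite (sat_ge (s k)) in Hlim by (auto; lra).
  assert (s i < C) by (apply (lt_of_sat_lt (s i)); auto; lra).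
  rewrite (sat_ge (s i)) in Hlim by (auto; lra); lra.
Qed.

Lemma x_const_above_level i a b :
  (i < N)%nat -> t0 < a <= b -> (forall t j, a <= t <= b -> (j < N)%nat -> s k <= x t j) ->
  x b i = x a i.
Proof.
  intros Hi Hab Habove; apply (eq_of_derivative_zero (fun t => x t i)); [lra|].
  intros c Hc.
  assert (Hflow : flow c i = 0).
  { unfold flow; rewrite <- (Rmult_0_r (INR N)), <- sumN_const; apply sumN_ext; intros j Hj.
    unfold output; rewrite (s_eq_limit_level j), (s_eq_limit_level i), !sat_ge by auto.
    ring. }
  rewrite <- Hflow; apply x_derivative; auto; lra.
Qed.

Definition frozen t := forall j, (j < N)%nat -> x t j = C.

Lemma x_eq_limit_of_tail u i :
  (i < N)%nat -> t0 < u -> (forall t, t > u -> frozen t) -> x u i = C.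
Proof.
  intros Hi Hu Htail; rewrite <- (Htail (u + 1) ltac:(lra) i Hi).
  symmetry; apply (right_cont_eq_of_const (fun t => x t i)); [| lra |].
  - exact (derivable_right_cont _ _ _ (x_derivative i u Hi Hu)).
  - intros v Hv; rewrite !Htail by (auto; lra); reflexivity.
Qed.

Lemma eventually_frozen : exists T, forall t, t > T -> frozen t.
Proof.
  destruct (eventually_and _ _ (eventually_ge (t0 + 1))
    (eventually_forall_lt N _ (fun j Hj => x_lim j Hj (C - s k) ltac:(lra)))) as [T HT].
  assert (Habove : forall t j, t >= T -> (j < N)%nat -> s k <= x t j).
  { intros t j Ht Hj; destruct (HT t Ht) as [_ Hx].
    pose proof (Rabs_def2 _ _ (Hx j Hj)); lra. }
  exists T; intros t Ht j Hj.
  apply (eq_limit_of_const_tail _ C T (x_lim j Hj)); [|lra].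
  intros a b Hab; destruct (HT a ltac:(lra)) as [Ha _].
  apply x_const_above_level; [auto | lra |].
  intros v l Hv Hl; apply Habove; auto; lra.
Qed.

(* At a frozen time [u > t0] all states equal [C > s k], so by continuity they stay
   above the saturation level on a neighbourhood of [u], where the dynamics is
   frozen as well. *)
Lemma frozen_extends_left u :
  t0 < u -> (forall t, t > u -> frozen t) -> exists d, d > 0 /\ forall t, t > u - d -> frozen t.
Proof.
  intros Hu Htail.
  destruct (exists_pos_forall_lt N (fun j d => forall t, Rabs (t - u) < d -> s k <= x t j))
    as [d [Hd Hnear]].
  - intros j d d' Hdd Hj t Ht; apply Hj; lra.
  - intros j Hj.
    destruct (derivable_cont_ball _ _ _ (x_derivative j u Hj Hu) (C - s k) ltac:(lra))
      as [d [Hd Hball]].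
    exists d; split; [exact Hd|]; intros t Ht.
    pose proof (Rabs_def2 _ _ (Hball t Ht)) as Hclose.
    rewrite (x_eq_limit_of_tail u j Hj Hu Htail) in Hclose; lra.
  - assert (0 < Rmin d (u - t0)) by (apply Rmin_glb_lt; lra).
    pose proof (Rmin_l d (u - t0)); pose proof (Rmin_r d (u - t0)).
    exists (Rmin d (u - t0)); split; [lra|]; intros t Ht j Hj.
    destruct (Rlt_dec u t) as [Hut|Hut]; [apply Htail; auto|].
    rewrite <- (x_eq_limit_of_tail u j Hj Hu Htail); symmetry.
    apply x_const_above_level; [auto | lra |].
    intros v l Hv Hl; apply Hnear; [exact Hl|]; rewrite Rabs_left1; lra.
Qed.

Lemma x_initial_eq_limit i : (i < N)%nat -> x t0 i = C.
Proof.
  intros Hi.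
  pose proof (backward_induction t0 frozen eventually_frozen frozen_extends_left) as Hfrozen.
  rewrite <- (Hfrozen (t0 + 1) ltac:(lra) i Hi).
  symmetry; apply (right_cont_eq_of_const (fun t => x t i)); [exact (proj2 x_solution i Hi) | lra |].
  intros v Hv; rewrite !Hfrozen by (auto; lra); reflexivity.
Qed.

End Saturated_limit.

End Saturated_network.

Lemma is_solution_opp N alpha s t0 x :
  (forall i, (i < N)%nat -> 0 < s i) ->
  is_solution N alpha s t0 x -> is_solution N alpha s t0 (fun t i => - x t i).
Proof.
  intros Hs [Hderiv Hcont]; split.
  - intros i Hi t Ht.
    replace (sumN N (fun j => alpha i j * (sat (s j) (- x t j) - sat (s i) (- x t i))))
      with (- sumN N (fun j => alpha i j * (sat (s j) (x t j) - sat (s i) (x t i)))).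
    + apply (derivable_pt_lim_opp (fun u => x u i)), Hderiv; auto.
    + rewrite <- sumN_opp; apply sumN_ext; intros j Hj.
      rewrite !sat_opp by auto; ring.
  - intros i Hi eps Heps; destruct (Hcont i Hi eps Heps) as [d [Hd Hclose]].
    exists d; split; [exact Hd|]; intros t Ht.
    replace (- x t i - - x t0 i) with (- (x t i - x t0 i)) by ring.
    rewrite Rabs_Ropp; auto.
Qed.

Theorem theorem1 (N : nat) (alpha : nat -> nat -> R) (s : nat -> R)
  (t0 : R) (x : R -> nat -> R)
  (Hsym : forall i j, (i < N)%nat -> (j < N)%nat -> alpha i j = alpha j i)
  (Hnn : forall i j, (i < N)%nat -> (j < N)%nat -> 0 <= alpha i j)
  (Hconn : connected N alpha)
  (Hs : forall i, (i < N)%nat -> 0 < s i)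
  (Hsol : is_solution N alpha s t0 x)
  (Hnc : exists i j, (i < N)%nat /\ (j < N)%nat /\ x t0 i <> x t0 j) :
  consensus N x <->
  / INR N * Rabs (sumN N (fun i => x t0 i)) <= minN N s.
Proof.
  destruct Hnc as [i [j [Hi [Hj Hne]]]].
  assert (HN : (0 < N)%nat) by lia.
  split; [|apply (consensus_of_mean_le N alpha s t0 x); auto].
  intros [C HC]; change (sumN N (fun i => x t0 i)) with (sumN N (x t0)).
  rewrite (mean_eq_limit N alpha s t0 x Hsym Hsol C HC), Rabs_mult, Rabs_right by (apply Rle_ge, pos_INR).
  rewrite <- Rmult_assoc, Rinv_l, Rmult_1_l by (apply not_0_INR; lia).
  destruct (minN_attained N s HN) as [k [Hk ->]].
  apply Rnot_lt_le; intros Hlt; apply Hne.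
  destruct (Rle_dec 0 C).
  - rewrite Rabs_right in Hlt by lra.
    rewrite !(x_initial_eq_limit N alpha s t0 x Hsym Hnn Hs Hsol Hconn k C); auto.
  - rewrite Rabs_left in Hlt by lra.
    assert (Hlim : forall l, (l < N)%nat -> tends_to (fun t => - x t l) (- C))
      by (intros l Hl; apply tends_to_opp; exact (HC l Hl)).
    enough (Hopp : - x t0 i = - x t0 j) by lra.
    rewrite !(x_initial_eq_limit N alpha s t0 (fun t i => - x t i) Hsym Hnn Hs
                (is_solution_opp N alpha s t0 x Hs Hsol) Hconn k (- C)); auto.
Qed.
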